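(* Let $\sigma$ be a signature including $\{\triangleright, ;\}$ and let $\mathcal{A}$ be a $\sigma$-algebra. (1) If $\mathcal{A}$ has a join-complete representation by partial functions, then composition in $\mathcal{A}$ is completely left-distributive over joins: for every $S \subseteq \mathcal{A}$ with $\bigvee S$ existing and every $a\in\mathcal{A}$, $\bigvee\{a;s : s\in S\}$ exists and equals $a ; \bigvee S$. (2) If $\mathcal{A}$ has a meet-complete representation by partial functions, then composition in $\mathcal{A}$ is completely left-distributive over meets: for every nonempty $S\subseteq\mathcal{A}$ with $\bigwedge S$ existing and every $a\in\mathcal{A}$, $\bigwedge\{a;s:s\in S\}$ exists and equals $a;\bigwedge S$.
   Context: Signatures $\sigma$ are sets of operation symbols drawn from: $\triangleright$ (antidomain restriction), $;$ (composition), $\wedge$ (intersection), $\mathrm{upd}$ (update), $\sqcup$ (preferential union), $\mathsf{D}$ (domain), $\mathsf{A}$ (antidomain), interpreted on partial functions as: $f \triangleright g = \{(x,y) \in g : x \notin \mathrm{dom}(f)\}$; $f;g=\{(x,z):\exists y\,((x,y)\in f,(y,z)\in g)\}$; $f\wedge g = f\cap g$; $\mathrm{upd}(f,g)(x)$ is $f(x)$ if $f(x)$ defined and $g(x)$ undefined, $g(x)$ if both defined, undefined otherwise; $(f\sqcup g)(x)$ is $f(x)$ if defined, else $g(x)$; $\mathsf{D}(f)$ = identity on $\mathrm{dom}(f)$; $\mathsf{A}(f)$ = identity on the complement of $\mathrm{dom}(f)$ in the base. A representation by partial functions is an isomorphism onto a $\sigma$-algebra of partial functions with these operations. Define $0 :=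 a\triangleright a$, $a\lhd b := (a\triangleright b)\triangleright b$, $a \le b :\iff a\lhd b = a$; for representable algebras this is a partial order and $a\le b\iff\theta(a)\subseteq\theta(b)$. $\theta$ is join complete if $\theta(\bigvee S)=\bigcup\theta[S]$ whenever $\bigvee S$ exists; meet complete if $\theta(\bigwedge S)=\bigcap\theta[S]$ whenever $S$ is nonempty and $\bigwedge S$ exists. *)

Inductive sym : Type :=
  | SRestr  (* antidomain restriction  |>  *)
  | SComp
  | SMeet
  | SUpd
  | SPref   (* preferential union        *)
  | SDom
  | SADom.

(** Only the operations
    whose symbol is in [sig] are part of the algebra; the interpretations
    of the other symbols are never used. *)
Record sigma_alg : Type := {
  car : Type;
  sig : sym -> Prop;
  op_restr : car -> car -> car;
  op_comp  : car -> car -> car;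
  op_meet  : car -> car -> car;
  op_upd   : car -> car -> car;
  op_pref  : car -> car -> car;
  op_dom   : car -> car;
  op_adom  : car -> car
}.

(** Partial functions on a base X, given by their graphs. *)
Definition rel (X : Type) := X -> X -> Prop.
Definition functional {X : Type} (f : rel X) : Prop :=
  forall x y z, f x y -> f x z -> y = z.
Definition in_dom {X : Type} (f : rel X) (x : X) : Prop := exists y, f x y.
Definition releq {X : Type} (f g : rel X) : Prop := forall x y, f x y <-> g x y.

Definition pf_restr {X} (f g : rel X) : rel X :=
  fun x y => g x y /\ ~ in_dom f x.
Definition pf_comp {X} (f g : rel X) : rel X :=
  fun x z => exists y, f x y /\ g y z.
Definition pf_meet {X} (f g : rel X) : rel X :=
  fun x y => f x y /\ g x y.
Definition pf_upd {X} (f g : rel X) : rel X :=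
  fun x y => (f x y /\ ~ in_dom g x) \/ (in_dom f x /\ g x y).
Definition pf_pref {X} (f g : rel X) : rel X :=
  fun x y => f x y \/ (~ in_dom f x /\ g x y).
Definition pf_D {X} (f : rel X) : rel X :=
  fun x y => x = y /\ in_dom f x.
Definition pf_A {X} (f : rel X) : rel X :=
  fun x y => x = y /\ ~ in_dom f x.

Definition is_rep (A : sigma_alg) (X : Type) (theta : car A -> rel X) : Prop :=
  (forall a, functional (theta a)) /\
  (forall a b, releq (theta a) (theta b) -> a = b) /\
  (sig A SRestr -> forall a b,
     releq (theta (op_restr A a b)) (pf_restr (theta a) (theta b))) /\
  (sig A SComp -> forall a b,
     releq (theta (op_comp A a b)) (pf_comp (theta a) (theta b))) /\
  (sig A SMeet -> forall a b,
     releq (theta (op_meet A a b)) (pf_meet (theta a) (theta b))) /\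
  (sig A SUpd -> forall a b,
     releq (theta (op_upd A a b)) (pf_upd (theta a) (theta b))) /\
  (sig A SPref -> forall a b,
     releq (theta (op_pref A a b)) (pf_pref (theta a) (theta b))) /\
  (sig A SDom -> forall a,
     releq (theta (op_dom A a)) (pf_D (theta a))) /\
  (sig A SADom -> forall a,
     releq (theta (op_adom A a)) (pf_A (theta a))).

(** a <| b := (a |> b) |> b ;  a <= b :<-> a <| b = a *)
Definition alg_le (A : sigma_alg) (a b : car A) : Prop :=
  op_restr A (op_restr A a b) b = a.

Definition is_lub (A : sigma_alg) (S : car A -> Prop) (j : car A) : Prop :=
  (forall s, S s -> alg_le A s j) /\
  (forall u, (forall s, S s -> alg_le A s u) -> alg_le A j u).
Definition is_glb (A : sigma_alg) (S : car A -> Prop) (m : car A) : Prop :=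
  (forall s, S s -> alg_le A m s) /\
  (forall u, (forall s, S s -> alg_le A u s) -> alg_le A u m).

Definition join_complete (A : sigma_alg) (X : Type) (theta : car A -> rel X) : Prop :=
  forall (S : car A -> Prop) (j : car A), is_lub A S j ->
    forall x y, theta j x y <-> exists s, S s /\ theta s x y.
Definition meet_complete (A : sigma_alg) (X : Type) (theta : car A -> rel X) : Prop :=
  forall (S : car A -> Prop) (m : car A), (exists s, S s) -> is_glb A S m ->
    forall x y, theta m x y <-> forall s, S s -> theta s x y.

Definition lcomp_set (A : sigma_alg) (a : car A) (S : car A -> Prop) : car A -> Prop :=
  fun t => exists s, S s /\ t = op_comp A a s.

From Stdlib Require Import Classical.

(* Through a representation theta by partial functions, the
   derived order a <= b of the algebra becomes inclusion of graphs
   (because theta((a |> b) |> b) is the restriction of theta(b) to the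
   domain of theta(a)), and composition becomes relational composition.
   Left composition with a fixed a is therefore monotone, so a;\/S is an
   upper bound of {a;s} and a;/\S a lower bound.
   (1) Extremality for joins: a pair of theta(a;\/S) factors through some
       pair of theta(\/S) = U theta[S], hence lies in some theta(a;s).
   (2) Extremality for meets: if (x,y) lies in every theta(a;s), the
       intermediate point is the unique image of x under the function
       theta(a), so it is the same for all s and the second step lies in
       n theta[S] = theta(/\S). *)

Section Representation.

Variables (A : sigma_alg) (X : Type) (theta : car A -> rel X).
Hypothesis theta_rep : is_rep A X theta.
Hypothesis sig_restr : sig A SRestr.
Hypothesis sig_comp : sig A SComp.

Lemma rep_functional (a : car A) : functional (theta a).
Proof. destruct theta_rep as [Hf _]. exact (Hf a). Qed.

Lemma rep_injective (a b : car A) : releq (theta a) (theta b) -> a = b.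
Proof. destruct theta_rep as [_ [Hinj _]]. exact (Hinj a b). Qed.

Lemma rep_restr (a b : car A) (x y : X) :
  theta (op_restr A a b) x y <-> theta b x y /\ ~ in_dom (theta a) x.
Proof. destruct theta_rep as [_ [_ [HR _]]]. exact (HR sig_restr a b x y). Qed.

Lemma rep_comp (a b : car A) (x y : X) :
  theta (op_comp A a b) x y <-> exists z, theta a x z /\ theta b z y.
Proof. destruct theta_rep as [_ [_ [_ [HC _]]]]. exact (HC sig_comp a b x y). Qed.

Lemma rep_restr_restr (a b : car A) (x y : X) :
  theta (op_restr A (op_restr A a b) b) x y <->
  theta b x y /\ in_dom (theta a) x.
Proof.
  rewrite rep_restr. split.
  - intros [Hb Hnot]. split; [exact Hb|].
    apply NNPP. intros Hna. apply Hnot. exists y. apply rep_restr. auto.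
  - intros [Hb [z Hz]]. split; [exact Hb|].
    intros [w Hw]. apply rep_restr in Hw. destruct Hw as [_ Hw].
    apply Hw. exists z. exact Hz.
Qed.

Lemma alg_le_iff (a b : car A) :
  alg_le A a b <-> (forall x y, theta a x y -> theta b x y).
Proof.
  unfold alg_le. split.
  - intros Hle x y Hxy. rewrite <- Hle in Hxy. apply rep_restr_restr in Hxy. tauto.
  - intros Hsub. apply rep_injective. intros x y. rewrite rep_restr_restr. split.
    + intros [Hb [z Hz]].
      rewrite (rep_functional b x y z Hb (Hsub x z Hz)). exact Hz.
    + intros Ha. split; [exact (Hsub x y Ha)|]. exists y. exact Ha.
Qed.

Lemma comp_mono_left (a s t : car A) :
  alg_le A s t -> alg_le A (op_comp A a s) (op_comp A a t).
Proof.
  rewrite !alg_le_iff. intros Hst x y. rewrite !rep_comp.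
  intros [z [Ha Hs]]. exists z. auto.
Qed.

Lemma lcomp_set_mem (a s : car A) (S : car A -> Prop) :
  S s -> lcomp_set A a S (op_comp A a s).
Proof. intros Hs. exists s. auto. Qed.

Lemma lcomp_lub (S : car A -> Prop) (j a : car A) :
  join_complete A X theta -> is_lub A S j ->
  is_lub A (lcomp_set A a S) (op_comp A a j).
Proof.
  intros Hjc Hlub. pose proof (Hjc S j Hlub) as Hj.
  destruct Hlub as [Hub _]. split.
  - intros t [s [Hs ->]]. exact (comp_mono_left a s j (Hub s Hs)).
  - intros u Hu. apply alg_le_iff. intros x y Hxy.
    apply rep_comp in Hxy. destruct Hxy as [z [Ha Hjz]].
    apply Hj in Hjz. destruct Hjz as [s [Hs Hsz]].
    apply (proj1 (alg_le_iff _ u) (Hu _ (lcomp_set_mem a s S Hs))).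
    apply rep_comp. exists z. auto.
Qed.

(* Since theta(a) is a function, a pair of theta(a;s) must pass through the
   unique image of x under theta(a). *)
Lemma comp_through_image (a s : car A) (x z y : X) :
  theta a x z -> theta (op_comp A a s) x y -> theta s z y.
Proof.
  intros Hz Hxy. apply rep_comp in Hxy. destruct Hxy as [w [Hw Hs]].
  rewrite (rep_functional a x z w Hz Hw). exact Hs.
Qed.

Lemma lcomp_glb (S : car A -> Prop) (m a : car A) :
  meet_complete A X theta -> (exists s, S s) -> is_glb A S m ->
  is_glb A (lcomp_set A a S) (op_comp A a m).
Proof.
  intros Hmc Hne Hglb. pose proof (Hmc S m Hne Hglb) as Hm.
  destruct Hglb as [Hlb _]. split.
  - intros t [s [Hs ->]]. exact (comp_mono_left a m s (Hlb s Hs)).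
  - intros u Hu. apply alg_le_iff. intros x y Hxy.
    assert (Hall : forall s, S s -> theta (op_comp A a s) x y).
    { intros s Hs. exact (proj1 (alg_le_iff u _) (Hu _ (lcomp_set_mem a s S Hs)) x y Hxy). }
    destruct Hne as [s0 Hs0].
    destruct (proj1 (rep_comp a s0 x y) (Hall s0 Hs0)) as [z [Ha _]].
    apply rep_comp. exists z. split; [exact Ha|].
    apply Hm. intros s Hs. exact (comp_through_image a s x z y Ha (Hall s Hs)).
Qed.

End Representation.

Theorem lemma5p5 (A : sigma_alg) (HsigR : sig A SRestr) (HsigC : sig A SComp) :
  ((exists (X : Type) (theta : car A -> rel X),
       is_rep A X theta /\ join_complete A X theta) ->
     forall (S : car A -> Prop) (j a : car A), is_lub A S j ->
       is_lub A (lcomp_set A a S) (op_comp A a j)) /\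
  ((exists (X : Type) (theta : car A -> rel X),
       is_rep A X theta /\ meet_complete A X theta) ->
     forall (S : car A -> Prop) (m a : car A), (exists s, S s) -> is_glb A S m ->
       is_glb A (lcomp_set A a S) (op_comp A a m)).
Proof.
  split.
  - intros [X [theta [Hrep Hjc]]] S j a Hlub.
    exact (lcomp_lub A X theta Hrep HsigR HsigC S j a Hjc Hlub).
  - intros [X [theta [Hrep Hmc]]] S m a Hne Hglb.
    exact (lcomp_glb A X theta Hrep HsigR HsigC S m a Hmc Hne Hglb).
Qed.
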